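(* Let $\sigma\colon O_1\to O_2$ be an isomorphism of finite $Act$-labelled posets, let $c_1,c_1'$ be causal markings, $K\subseteq|O_1|$, $a\in Act$, $e\in\mathcal{E}\setminus X_{O_1}$ and $e'\in\mathcal{E}\setminus X_{O_2}$. Then $O_1\rhd c_1\xrightarrow{K\vdash e_a}\delta(O_1,K,e_a)\rhd c_1'$ in the concrete causal case graph if and only if $O_2\rhd c_1\sigma\xrightarrow{\sigma(K)\vdash e'_a}\delta(O_2,\sigma(K),e'_a)\rhd c_1'\,\sigma[e_a\mapsto e'_a]$ in the concrete causal case graph.
   Context: Fix a set $Act$ of action labels and an infinite set $\mathcal{E}$ of event names. A finite $Act$-labelled poset is $O=(X_O,\preccurlyeq_O,l_O)$ with $X_O\subseteq\mathcal{E}$ finite, $\preccurlyeq_O$ a partial order on $X_O$ and $l_O\colon X_O\to Act$; write $|O|=\{(x,l_O(x)):x\in X_O\}$, write $x_a$ for $(x,a)$, and regard $O$ also as a poset on $|O|$. A morphism $\sigma\colon O\to O'$ is a map $X_O\to X_{O'}$ preserving order and labels, acting on labelled events by $\sigma(x_a)=\sigma(x)_a$; an isomorphism is a bijective morphism whose inverse is a morphism. For $K\subseteq|O|$, $\max_O K$ is the set of maximal elements of $K$; $K$ is down-closed w.r.t. $O$ if $y\in K$ and $x\preccurlyeq_O y$ imply $x\in K$. A net is $N=(S,T,F,l)$ with disjoint sets $S$ (places) and $T$ (transitions), $F\subseteq(S\times T)\cup(T\times S)$, $l\colon T\to Act$; ${}^\bullet t=\{s:(s,t)\in F\}$ and $t^\bullet=\{s:(t,s)\in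 F\}$ are assumed nonempty. Fix a net $N$. A causal marking is a finite set $c$ of pairs written $K\vdash s$ with $s\in S$ and $K$ a finite subset of $\mathcal{E}\times Act$; $\mathcal{K}(c)$ is the union of all cause sets $K$ in $c$, $|c|$ is the set of places occurring in $c$, and for a set of places $m$, $K\vdash m=\{K\vdash s:s\in m\}$. For a map $\sigma$ on events, $c\sigma=\{\sigma(K)\vdash s: K\vdash s\in c\}$. A P-marking is a pair $O\rhd c$ of a finite labelled poset $O$ and a causal marking $c$ such that every cause set of $c$ is a down-closed subset of $|O|$. For $K\subseteq|O|$, $e\in\mathcal{E}\setminus X_O$, $a\in Act$, $\delta(O,K,e_a)$ is the labelled poset obtained from $O$ by adding the event $e$ with label $a$ and the pairs $k\preccurlyeq e_a$ for $k\in K$, then taking the reflexive-transitive closure. The concrete causal case graph of $N$ is the smallest transition relation on P-markings closed under the rule: if $t\in T$, $O\rhd c\cup c'$ is a P-marking, $|c|={}^\bullet t$, $a=l(t)$, $e\in\mathcal{E}\setminus X_O$ and $K=\max_O\mathcal{K}(c)$, then $O\rhd c\cup c'\xrightarrow{K\vdash e_a}\delta(O,K,e_a)\rhd(\mathcal{K}(c)\cup\{e_a\}\vdash t^\bullet)\cup c'$. For $\sigma\colon O_1\to O_2$ and $e\notin X_{O_1}$, $e'\notin X_{O_2}$, $\sigma[e_a\mapsto e'_a]$ is the map on $X_{O_1}\cup\{e\}$ that agrees with $\sigma$ on $X_{O_1}$ and sends $e$ to $e'$. *)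

From HB Require Import structures.
From mathcomp Require Import all_boot.
From mathcomp Require Export finmap.
Set Implicit Arguments. Unset Strict Implicit. Unset Printing Implicit Defensive.
Local Open Scope fset_scope.

(* A labelled poset: finite carrier X_O of event names, an order relation
   (meaningful on X_O) and a labelling (meaningful on X_O). *)
Record lposet (E Act : choiceType) := LPoset {
  pX : {fset E};
  ple : E -> E -> bool;
  plab : E -> Act }.

Section Posets.
Variables E Act : choiceType.
Implicit Types (O : lposet E Act).

Definition is_lposet O : Prop :=
  (forall x, x \in pX O -> ple O x x) /\
  (forall x y, x \in pX O -> y \in pX O -> ple O x y -> ple O y x -> x = y) /\
  (forall x y z, x \in pX O -> y \in pX O -> z \in pX O ->
      ple O x y -> ple O y z -> ple O x z).

(* membership in |O| = {(x, l_O x) : x in X_O} *)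
Definition in_levs O (k : E * Act) : bool :=
  (k.1 \in pX O) && (k.2 == plab O k.1).

Definition leL O (k k' : E * Act) : bool := ple O k.1 k'.1.

Definition maxs O (K : {fset E * Act}) : {fset E * Act} :=
  [fset k in K | ~~ has (fun k' => (k' != k) && leL O k k') K].

Definition downclosed O (K : {fset E * Act}) : Prop :=
  (forall k, k \in K -> in_levs O k) /\
  (forall k x, k \in K -> in_levs O x -> leL O x k -> x \in K).

(* delta(O, K, e_a): add e with label a and k <= e_a for k in K,
   then reflexive-transitive closure. *)
Definition delta O (K : {fset E * Act}) (e : E) (a : Act) : lposet E Act :=
  LPoset (e |` pX O)
    (fun x y => if y == e then (x == e) || has (fun k => ple O x k.1) K
                else (x != e) && ple O x y)
    (fun x => if x == e then a else plab O x).

Definition is_morph O1 O2 (f : E -> E) : Prop :=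
  (forall x, x \in pX O1 -> f x \in pX O2) /\
  (forall x y, x \in pX O1 -> y \in pX O1 -> ple O1 x y -> ple O2 (f x) (f y)) /\
  (forall x, x \in pX O1 -> plab O2 (f x) = plab O1 x).

Definition is_iso O1 O2 (f : E -> E) : Prop :=
  is_morph O1 O2 f /\
  exists g : E -> E, is_morph O2 O1 g /\
    (forall x, x \in pX O1 -> g (f x) = x) /\
    (forall y, y \in pX O2 -> f (g y) = y).

Definition lev_map (f : E -> E) (K : {fset E * Act}) : {fset E * Act} :=
  [fset (f k.1, k.2) | k in K].

Definition upd (f : E -> E) (e e' : E) : E -> E :=
  fun x => if x == e then e' else f x.
End Posets.

Record net (S T Act : Type) := Net {
  npre : S -> T -> Prop;   (* (s,t) in F *)
  npost : T -> S -> Prop;  (* (t,s) in F *)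
  nlab : T -> Act }.

Definition net_wf (S T Act : Type) (N : net S T Act) : Prop :=
  forall t, (exists s, npre N s t) /\ (exists s, npost N t s).

Section Markings.
Variables E Act S : choiceType.

Definition cmark := {fset {fset E * Act} * S}.

Definition causes (c : cmark) : {fset E * Act} := (\bigcup_(p <- c) p.1)%fset.
Definition places (c : cmark) : {fset S} := [fset p.2 | p in c].
Definition tok (K : {fset E * Act}) (m : {fset S}) : cmark := [fset (K, s) | s in m].
Definition cmap (f : E -> E) (c : cmark) : cmark :=
  [fset (lev_map f p.1, p.2) | p in c].

Definition pmarking (O : lposet E Act) (c : cmark) : Prop :=
  is_lposet O /\ forall p, p \in c -> downclosed O p.1.
End Markings.

Inductive ccstep (E Act S T : choiceType) (N : net S T Act) :
  lposet E Act -> cmark E Act S -> ({fset E * Act} * E * Act) ->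
  lposet E Act -> cmark E Act S -> Prop :=
| CCStep (t : T) (O : lposet E Act) (c c' : cmark E Act S) (mpost : {fset S}) (e : E) :
    pmarking O (c `|` c') ->
    (forall s, s \in places c <-> npre N s t) ->
    (forall s, s \in mpost <-> npost N t s) ->
    e \notin pX O ->
    ccstep N O (c `|` c') (maxs O (causes c), e, nlab N t)
      (delta O (maxs O (causes c)) e (nlab N t))
      (tok (causes c `|` [fset (e, nlab N t)]) mpost `|` c').

From mathcomp Require Import all_boot finmap.
Set Implicit Arguments. Unset Strict Implicit.
Local Open Scope fset_scope.

(* An isomorphism commutes with taking maximal elements and preserves
   down-closed cause sets, so it maps a step of O1 to a step of O2 firing the
   same transition; the fresh event e occurs only in the produced tokens, so it
   may be renamed to any event e' fresh for O2. The converse is this forward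
   direction for the inverse isomorphism. *)

Section CausalMarkings.
Variables E Act S : choiceType.
Implicit Types (c : cmark E Act S) (L : {fset E * Act}) (f h : E -> E).

Lemma causesP c k : reflect (exists2 p, p \in c & k \in p.1) (k \in causes c).
Proof.
apply: (iffP (bigfcupP _ _ _ _)) => [[p /andP[pc _] kp]|[p pc kp]];
  by exists p; rewrite ?pc.
Qed.

Lemma causesU c c' : causes (c `|` c') = causes c `|` causes c'.
Proof.
apply/fsetP => k; rewrite inE; apply/causesP/orP.
  by case=> p; rewrite inE => /orP[] pc kp; [left|right]; apply/causesP; exists p.
by case=> /causesP[p pc kp]; exists p; rewrite // inE pc ?orbT.
Qed.

Lemma lev_mapU f L L' : lev_map f (L `|` L') = lev_map f L `|` lev_map f L'.
Proof. exact: imfsetU. Qed.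

Lemma lev_map1 f (k : E * Act) : lev_map f [fset k] = [fset (f k.1, k.2)].
Proof. exact: imfset_fset1. Qed.

Lemma lev_map_comp f h L : lev_map f (lev_map h L) = lev_map (f \o h) L.
Proof. by rewrite /lev_map -imfset_comp. Qed.

Lemma eq_lev_map f h L : {in L, forall k, f k.1 = h k.1} ->
  lev_map f L = lev_map h L.
Proof. by move=> fh; apply: eq_in_imfset => k kL; rewrite /= fh. Qed.

Lemma lev_map_id f L : {in L, forall k, f k.1 = k.1} -> lev_map f L = L.
Proof.
move=> fid; rewrite /lev_map (@eq_in_imfset _ _ _ _ id) ?imfset_id //.
by move=> [x y] kL; rewrite /= (fid (x, y)).
Qed.

Lemma cmapU f c c' : cmap f (c `|` c') = cmap f c `|` cmap f c'.
Proof. exact: imfsetU. Qed.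

Lemma cmap_tok f L (m : {fset S}) : cmap f (tok L m) = tok (lev_map f L) m.
Proof.
apply/fsetP => x; apply/imfsetP/imfsetP => [[p /imfsetP[s sm ->] ->]|[s sm ->]].
  by exists s.
by exists (L, s) => //; apply/imfsetP; exists s.
Qed.

Lemma cmap_comp f h c : cmap f (cmap h c) = cmap (f \o h) c.
Proof.
rewrite /cmap -imfset_comp; apply: eq_in_imfset => p _ /=.
by rewrite lev_map_comp.
Qed.

Lemma eq_cmap f h c : {in causes c, forall k, f k.1 = h k.1} ->
  cmap f c = cmap h c.
Proof.
move=> fh; apply: eq_in_imfset => -[L s] pc /=; congr (_, _).
by apply: eq_lev_map => k kL; apply: fh; apply/causesP; exists (L, s).
Qed.

Lemma cmap_id f c : {in causes c, forall k, f k.1 = k.1} -> cmap f c = c.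
Proof.
move=> fid; rewrite (@eq_cmap f id) => [|k /fid //].
rewrite /cmap (@eq_in_imfset _ _ _ _ id) ?imfset_id // => -[L s] _ /=.
by rewrite lev_map_id.
Qed.

Lemma causes_cmap f c : causes (cmap f c) = lev_map f (causes c).
Proof.
apply/fsetP => x; apply/causesP/imfsetP => [[p /imfsetP[q qc ->] /imfsetP[k kq ->]]|].
  by exists k => //; apply/causesP; exists q.
move=> [k /causesP[q qc kq] ->]; exists (lev_map f q.1, q.2).
  by apply/imfsetP; exists q.
by apply/imfsetP; exists k.
Qed.

Lemma places_cmap f c : places (cmap f c) = places c.
Proof. by rewrite /places /cmap -imfset_comp. Qed.

Lemma pmarking_causes (O : lposet E Act) c k :
  pmarking O c -> k \in causes c -> k.1 \in pX O.
Proof.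
by case=> _ dc /causesP[p /dc[kin _] /kin /andP[]].
Qed.

End CausalMarkings.

Section Isomorphisms.
Variables E Act : choiceType.
Implicit Types (O : lposet E Act) (L : {fset E * Act}) (f g : E -> E).

Lemma iso_inj O1 O2 f : is_iso O1 O2 f -> {in pX O1 &, injective f}.
Proof. by case=> _ [g [_ [gf _]]] x y xO yO fxy; rewrite -(gf x xO) fxy gf. Qed.

Lemma iso_inv O1 O2 f : is_iso O1 O2 f ->
  exists g, is_iso O2 O1 g /\ {in pX O1, cancel f g}.
Proof. by case=> fm [g [gm [gf fg]]]; exists g; do !split => //; exists f. Qed.

Lemma maxs_lev_map O1 O2 f L : is_iso O1 O2 f ->
  {in L, forall k, k.1 \in pX O1} ->
  lev_map f (maxs O1 L) = maxs O2 (lev_map f L).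
Proof.
move=> fiso LO; have finj := iso_inj fiso.
case: fiso => -[fX [fle _]] [g [[_ [gle _]] [gf _]]].
apply/fsetP => x; apply/imfsetP/idP.
- move=> [k /= +] ->; rewrite !inE /= => /andP[kL kmax].
  apply/andP; split; first by apply/imfsetP; exists k.
  apply/hasP => -[_ /imfsetP[/= k' k'L ->] /andP[ne le]].
  move/negP: kmax; apply; apply/hasP; exists k' => //.
  rewrite (contraNneq _ ne) => [|-> //] /=.
  by rewrite /leL -(gf _ (LO _ kL)) -(gf _ (LO _ k'L)) gle ?fX ?LO.
- rewrite !inE /= => /andP[/imfsetP[/= k kL ->] kmax].
  exists k => //=; rewrite !inE /= kL /=.
  apply/hasP => -[k' k'L /andP[ne le]].
  move/negP: kmax; apply; apply/hasP; exists (f k'.1, k'.2).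
    by apply/imfsetP; exists k'.
  rewrite /leL /= fle ?LO // andbT.
  apply: contraNneq ne => -[/finj eq1 eq2].
  by rewrite [k']surjective_pairing eq1 ?LO // eq2 -surjective_pairing.
Qed.

Lemma downclosed_lev_map O1 O2 f L : is_iso O1 O2 f -> downclosed O1 L ->
  downclosed O2 (lev_map f L).
Proof.
case=> -[fX [fle flab]] [g [[gX [gle glab]] [gf fg]]] [Llev Ldown]; split.
- move=> _ /imfsetP[/= k /Llev /andP[kO klab] ->].
  by rewrite /in_levs /= fX // flab.
- move=> _ [x y] /imfsetP[/= k kL ->]; rewrite /in_levs /leL /= => /andP[xO /eqP->] le.
  have kO : k.1 \in pX O1 by case/andP: (Llev _ kL).
  apply/imfsetP; exists (g x, plab O2 x); last by rewrite /= fg.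
  apply: Ldown kL _ _; rewrite /in_levs /leL /= ?gX ?glab ?eqxx //.
  by rewrite -(gf _ kO) gle ?fX.
Qed.

Lemma pmarking_cmap (S : choiceType) O1 O2 f (c : cmark E Act S) :
  is_lposet O2 -> is_iso O1 O2 f -> pmarking O1 c -> pmarking O2 (cmap f c).
Proof.
move=> O2po fiso [_ cdown]; split => // _ /imfsetP[/= p pc ->].
exact: downclosed_lev_map fiso (cdown _ pc).
Qed.

Lemma upd_cancel O1 O2 f g e e' : {in pX O1, forall x, f x \in pX O2} ->
  {in pX O1, cancel f g} -> e' \notin pX O2 ->
  {in e |` pX O1, cancel (upd f e e') (upd g e' e)}.
Proof.
move=> fX gf e'O x; rewrite !inE /upd; case: eqP => [-> _|_ /= xO].
  by rewrite eqxx.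
by rewrite gf // ifN //; apply: contraNneq e'O => <-; rewrite fX.
Qed.

End Isomorphisms.

Lemma ccstep_iso (E Act S T : choiceType) (N : net S T Act)
    (O1 O2 : lposet E Act) (sigma : E -> E) (c1 c1' : cmark E Act S)
    (K : {fset E * Act}) (a : Act) (e e' : E) (D : lposet E Act) :
  is_lposet O2 -> is_iso O1 O2 sigma -> e' \notin pX O2 ->
  ccstep N O1 c1 (K, e, a) D c1' ->
  ccstep N O2 (cmap sigma c1) (lev_map sigma K, e', a)
    (delta O2 (lev_map sigma K) e' a) (cmap (upd sigma e e') c1').
Proof.
move=> O2po siso e'O; move El: (K, e, a) => l st.
case: st El siso => t O c c' mpost e0 pm pre post e0O [-> -> ->] siso.
have cO k : k \in causes c -> k.1 \in pX O.
  by move=> kc; apply: pmarking_causes pm _; rewrite causesU inE kc.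
have c'O k : k \in causes c' -> k.1 \in pX O.
  by move=> kc; apply: pmarking_causes pm _; rewrite causesU inE kc orbT.
have upd_old (L : {fset E * Act}) : {in L, forall k, k.1 \in pX O} ->
    {in L, forall k, upd sigma e0 e' k.1 = sigma k.1}.
  move=> LO k /LO kO; rewrite /upd ifN //.
  by apply: contraNneq e0O => <-.
rewrite (maxs_lev_map siso cO) !cmapU cmap_tok lev_mapU lev_map1 /=.
have -> : upd sigma e0 e' e0 = e' by rewrite /upd eqxx.
rewrite (eq_lev_map (upd_old _ cO)) (eq_cmap (upd_old _ c'O)) -causes_cmap.
apply: CCStep => // [|s]; last by rewrite places_cmap.
by rewrite -cmapU; apply: pmarking_cmap pm.
Qed.

Theorem lemma1 (E Act S T : choiceType) (N : net S T Act)
  (E_infinite : forall X : {fset E}, exists x, x \notin X)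
  (HN : net_wf N)
  (O1 O2 : lposet E Act) (sigma : E -> E)
  (HO1 : is_lposet O1) (HO2 : is_lposet O2) (Hiso : is_iso O1 O2 sigma)
  (c1 c1' : cmark E Act S) (K : {fset E * Act}) (a : Act) (e e' : E)
  (HK : forall k, k \in K -> in_levs O1 k)
  (He : e \notin pX O1) (He' : e' \notin pX O2)
  (Hc1 : forall k, k \in causes c1 -> k.1 \in pX O1)
  (Hc1' : forall k, k \in causes c1' -> k.1 \in e |` pX O1) :
  ccstep N O1 c1 (K, e, a) (delta O1 K e a) c1' <->
  ccstep N O2 (cmap sigma c1) (lev_map sigma K, e', a)
    (delta O2 (lev_map sigma K) e' a) (cmap (upd sigma e e') c1').
Proof.
split; first exact: ccstep_iso.
have [g [giso gsigma]] := iso_inv Hiso.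
have sigmaX : {in pX O1, forall x, sigma x \in pX O2} by case: Hiso => -[].
move=> /(ccstep_iso HO1 giso He).
rewrite !cmap_comp lev_map_comp lev_map_id => [|k /HK /andP[kO _]]; last exact: gsigma.
rewrite cmap_id => [|k /Hc1]; last exact: gsigma.
rewrite cmap_id // => k /Hc1'; exact: (upd_cancel sigmaX gsigma He').
Qed.
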